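(* Let $\Gamma=(V,m,\tau)$ be a weak $W$-graph and let $A\subseteq\Delta$. The following are equivalent: (1) there is some $v\in V$ with $\tau(v)=A$; (2) the operator $Q(\Delta\setminus A)R(A)$ is nonzero on $\mathbb{C}V$; (3) the trace of $Q(\Delta\setminus A)R(A)$ on $\mathbb{C}V$ is nonzero; (4) the trace of $R(A)Q(\Delta\setminus A)$ on $\mathbb{C}V$ is nonzero.
   Context: $W$ is a Weyl group with a fixed set $\Delta$ of simple roots; for a root $\alpha$, $s_\alpha$ is the reflection in the hyperplane orthogonal to $\alpha$, and $\operatorname{sgn}$ is the sign character of $W$. A weak $W$-graph is a triple $\Gamma=(V,m,\tau)$ where $V$ is a finite set, $m:V\times V\to\mathbb{C}$ is a map, and $\tau$ is a map from $V$ to the power set of $\Delta$, such that the linear maps $s_\alpha:\mathbb{C}V\to\mathbb{C}V$ ($\alpha\in\Delta$) given on basis vectors by $s_\alpha(v)=-v$ if $\alpha\in\tau(v)$ and $s_\alpha(v)=v-\sum_{u\in V,\ \alpha\in\tau(u)} m(u,v)u$ if $\alpha\notin\tau(v)$ define a representation of $W$ on $\mathbb{C}V$. For $B\subseteq\Delta$, $W(B)$ is the subgroup generated by $\{s_\alpha:\alpha\in B\}$, and $Q(B)=\frac{1}{|W(B)|}\sum_{g\in W(B)}g$, $R(B)=\frac{1}{|W(B)|}\sum_{g\in W(B)}\operatorname{sgn}(g)g$, elements of the group algebra $\mathbb{C}[W]$ acting on $\mathbb{C}V$. *)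

From HB Require Import structures.
From mathcomp Require Import all_boot all_order all_algebra all_fingroup.
From mathcomp Require Import reals complex.
Set Implicit Arguments. Unset Strict Implicit. Unset Printing Implicit Defensive.
Import Order.TTheory GRing.Theory Num.Theory.
Local Open Scope ring_scope.

Definition dotv (R : realType) (k : nat) (u v : 'rV[R]_k) : R :=
  \sum_(i < k) u 0 i * v 0 i.

(* matrix (acting on row vectors by right multiplication) of the reflection
   in the hyperplane orthogonal to a: x |-> x - 2 (x,a)/(a,a) a *)
Definition refl_mx (R : realType) (k : nat) (a : 'rV[R]_k) : 'M[R]_k :=
  1%:M - (2 / dotv a a) *: (a^T *m a).

Definition is_root_system (R : realType) (k : nat) (Phi : seq 'rV[R]_k) : Prop :=
  [/\ uniq Phi, 0 \notin Phi,
      \rank (\matrix_(i < size Phi) nth 0 Phi i) = k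
    & (forall a b, a \in Phi -> b \in Phi -> b *m refl_mx a \in Phi)]
  /\ (forall a (c : R), a \in Phi -> c *: a \in Phi -> c = 1 \/ c = -1)
  /\ (forall a b, a \in Phi -> b \in Phi -> (2 * dotv b a / dotv a a) \is a Num.int).

Definition is_base (R : realType) (k l : nat) (Phi : seq 'rV[R]_k)
    (alpha : 'I_l -> 'rV[R]_k) : Prop :=
  [/\ (forall i, alpha i \in Phi),
      row_free (\matrix_(i < l) alpha i)
    & (forall b, b \in Phi -> exists c : 'I_l -> int,
          b = \sum_(i < l) (c i)%:~R *: alpha i /\
          ((forall i, (0 <= c i)%R) \/ (forall i, (c i <= 0)%R)))].

(* (W, s) is the Weyl group of the root system Phi with base alpha: W is an
   abstract finite group generated by s i (i in Delta = 'I_l), realized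
   faithfully by rho0 as the group of orthogonal maps generated by the simple
   reflections s_{alpha i}. *)
Definition is_weyl_group (R : realType) (k l : nat) (Phi : seq 'rV[R]_k)
    (alpha : 'I_l -> 'rV[R]_k) (gT : finGroupType) (W : {group gT})
    (s : 'I_l -> gT) (rho0 : gT -> 'M[R]_k) : Prop :=
  [/\ is_root_system Phi, is_base Phi alpha,
      W :=: <<[set s i | i : 'I_l]>>%g
    & rho0 1%g = 1%:M]
  /\ [/\
      {in W &, forall x y, rho0 (x * y)%g = rho0 x *m rho0 y},
      {in W &, injective rho0}
    & (forall i, rho0 (s i) = refl_mx (alpha i))].

Definition sgnW (R : realType) (k : nat) (gT : finGroupType)
    (rho0 : gT -> 'M[R]_k) (g : gT) : R[i] := ((\det (rho0 g))%:C)%C.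

(* ---------- weak W-graphs (V = 'I_n, C = R[i]) ---------- *)

(* the operator s_a on CV, as a matrix acting on column vectors:
   column v is s_a(v) expressed in the basis V *)
Definition wg_op (R : realType) (n l : nat) (m : 'I_n -> 'I_n -> R[i])
    (tau : 'I_n -> {set 'I_l}) (a : 'I_l) : 'M[R[i]]_n :=
  \matrix_(u, v) (if a \in tau v then - ((u == v)%:R)
                  else (u == v)%:R - (a \in tau u)%:R * m u v).

(* rho is a representation of W on CV with rho (s a) = wg_op a;
   Gamma = (V, m, tau) is a weak W-graph iff such a rho exists *)
Definition is_wg_rep (R : realType) (n l : nat) (m : 'I_n -> 'I_n -> R[i])
    (tau : 'I_n -> {set 'I_l}) (gT : finGroupType) (W : {group gT})
    (s : 'I_l -> gT) (rho : gT -> 'M[R[i]]_n) : Prop :=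
  [/\ rho 1%g = 1%:M,
      {in W &, forall x y, rho (x * y)%g = rho x *m rho y}
    & forall a, rho (s a) = wg_op m tau a].

Definition parabolic (gT : finGroupType) (l : nat) (s : 'I_l -> gT)
    (B : {set 'I_l}) : {set gT} := <<[set s i | i in B]>>%g.

Definition Qop (R : realType) (n l : nat) (gT : finGroupType) (s : 'I_l -> gT)
    (rho : gT -> 'M[R[i]]_n) (B : {set 'I_l}) : 'M[R[i]]_n :=
  (#|parabolic s B|%:R)^-1 *: \sum_(g in parabolic s B) rho g.

Definition Rop (R : realType) (k n l : nat) (gT : finGroupType) (s : 'I_l -> gT)
    (rho0 : gT -> 'M[R]_k) (rho : gT -> 'M[R[i]]_n) (B : {set 'I_l})
    : 'M[R[i]]_n :=
  (#|parabolic s B|%:R)^-1 *: \sum_(g in parabolic s B) sgnW rho0 g *: rho g.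

From mathcomp Require Import all_boot all_order all_algebra all_fingroup.
From mathcomp Require Import reals complex sesquilinear spectral.
Set Implicit Arguments. Unset Strict Implicit. Unset Printing Implicit Defensive.
Import Order.TTheory GRing.Theory Num.Theory.
Local Open Scope ring_scope.

(* If some vertex v has tau v = A, then the v-th row of every element of W(~: A)
   and, up to the sign, the v-th column of every element of W(A) are unit
   vectors, so Q(~: A) R(A) has the entry 1 at (v, v).  If there is no such
   vertex, then for each u either some b in tau u \ A kills the u-th column of
   Q(~: A) (as Q s_b = Q while s_b u = -u), or some a in A \ tau u kills the u-th
   row of R(A) (as s_a R = -R while u s_a = u).  Finally Q and R are averages of
   W over real linear characters, hence idempotents that are Hermitian for a
   W-invariant inner product, and for Hermitian idempotents
   tr (Q R) = tr ((Q R) (Q R)^* ) vanishes only if Q R = 0. *)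

Lemma det_1B_rank1 (F : comPzRingType) k (u v : 'rV[F]_k) :
  \det (1%:M - u^T *m v) = 1 - (v *m u^T) 0 0.
Proof.
pose M := block_mx (1%:M : 'M[F]_1) v u^T (1%:M : 'M[F]_k).
have M_lu : M = block_mx 1%:M 0 u^T 1%:M *m block_mx 1%:M v 0 (1%:M - u^T *m v).
  by rewrite mulmx_block ?mulmx1 ?mul1mx ?mul0mx ?mulmx0 ?addr0 ?add0r addrC subrK.
have M_ul : M = block_mx (1%:M - v *m u^T) v 0 1%:M *m block_mx 1%:M 0 u^T 1%:M.
  by rewrite mulmx_block ?mulmx1 ?mul1mx ?mul0mx ?mulmx0 ?addr0 ?add0r subrK.
have := congr1 determinant M_ul; rewrite M_lu !det_mulmx.
rewrite !(@det_lblock _ 1 k) !(@det_ublock _ 1 k) !det1 !mul1r !mulr1 det_mx11.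
by move=> ->; rewrite !mxE eqxx.
Qed.

Lemma dotv_eq0 (R : realType) k (a : 'rV[R]_k) : (dotv a a == 0) = (a == 0).
Proof.
apply/eqP/eqP => [a0|->]; last by rewrite /dotv big1 // => i _; rewrite mxE mul0r.
apply/rowP => i; rewrite mxE; apply/eqP.
have a_sqr_ge0 j : true -> 0 <= a 0 j * a 0 j by rewrite -expr2 sqr_ge0.
by have /eqP := @psumr_eq0P _ _ _ _ a_sqr_ge0 a0 i isT; rewrite mulf_eq0 orbb.
Qed.

Lemma det_refl_mx (R : realType) k (a : 'rV[R]_k) : a != 0 -> \det (refl_mx a) = -1.
Proof.
move=> a_neq0; rewrite /refl_mx scalemxAl.
have -> : (2 / dotv a a) *: a^T = ((2 / dotv a a) *: a)^T by rewrite linearZ.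
rewrite det_1B_rank1 linearZ /= -scalemxAr mxE [(a *m a^T) 0 0]mxE.
rewrite (eq_bigr (fun j => a 0 j * a 0 j)) => [|j _]; last by rewrite mxE.
by rewrite divfK ?dotv_eq0 // -[2]/(1 + 1) opprD addNKr.
Qed.

Lemma gen_mul_ind (gT : finGroupType) (S : {set gT}) (P : gT -> Prop) :
  P 1%g -> (forall x y, x \in S -> y \in <<S>>%g -> P y -> P (x * y)%g) ->
  {in <<S>>%g, forall g, P g}.
Proof.
move=> P1 PM g /gen_prodgP [k [c Sc ->]] {g}.
elim: k c Sc => [|k IHk] c Sc; first by rewrite big_ord0.
rewrite big_ord_recl; apply: PM; first exact: Sc.
  by apply: group_prod => j _; apply: mem_gen.
by apply: IHk => j.
Qed.

Definition mx_avg (F : fieldType) (gT : finGroupType) (B : {set gT}) n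
    (chi : gT -> F) (rho : gT -> 'M[F]_n) : 'M[F]_n :=
  (#|B|%:R)^-1 *: \sum_(g in B) chi g *: rho g.

Lemma mx_avg_conj (F : fieldType) (gT : finGroupType) (B : {set gT}) n
    (chi : gT -> F) (rho : gT -> 'M[F]_n) (P : 'M[F]_n) :
  P *m mx_avg B chi rho *m invmx P = mx_avg B chi (fun g => P *m rho g *m invmx P).
Proof.
rewrite /mx_avg -scalemxAr -scalemxAl mulmx_sumr mulmx_suml; congr (_ *: _).
by apply: eq_bigr => g _; rewrite -scalemxAr -scalemxAl.
Qed.

Lemma mx_avg_entry_const (F : numFieldType) (gT : finGroupType) (B : {group gT}) n
    (chi : gT -> F) (rho : gT -> 'M[F]_n) i j c :
  {in B, forall g, chi g * rho g i j = c} -> mx_avg B chi rho i j = c.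
Proof.
move=> Bc; rewrite /mx_avg mxE summxE (eq_bigr (fun _ => c)) => [|g Bg]; last first.
  by rewrite mxE Bc.
by rewrite sumr_const -[c *+ _]mulr_natr mulrC mulfK // pnatr_eq0 -lt0n cardG_gt0.
Qed.

Section SignCharacterAverage.

Variables (F : numFieldType) (gT : finGroupType) (B : {group gT}) (n : nat).
Variables (chi : gT -> F) (rho : gT -> 'M[F]_n).
Hypothesis chiM : {in B &, forall x y, chi (x * y)%g = chi x * chi y}.
Hypothesis chi_sqr : {in B, forall g, chi g ^+ 2 = 1}.
Hypothesis rhoM : {in B &, forall x y, rho (x * y)%g = rho x *m rho y}.

Lemma sign_char_pm1 g : g \in B -> chi g = 1 \/ chi g = -1.
Proof.
move=> Bg; have : (chi g == 1) || (chi g == -1) by rewrite -sqrf_eq1 chi_sqr.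
by case/orP=> /eqP; [left | right].
Qed.

Lemma sign_char1 : chi 1%g = 1.
Proof. by have := chiM (group1 B) (group1 B); rewrite mulg1 -expr2 chi_sqr. Qed.

Lemma sign_charV g : g \in B -> chi (g^-1)%g = chi g.
Proof.
move=> Bg; have := chiM Bg (groupVr Bg); rewrite mulgV sign_char1.
by move/(congr1 ( *%R (chi g))); rewrite mulr1 mulrA -expr2 chi_sqr // mul1r.
Qed.

Lemma mx_avg_mulr h : h \in B -> mx_avg B chi rho *m rho h = chi h *: mx_avg B chi rho.
Proof.
move=> Bh; rewrite /mx_avg -scalemxAl mulmx_suml scalerA mulrC -scalerA.
congr (_ *: _); rewrite scaler_sumr [RHS](reindex_inj (mulIg h)) /=.
apply: eq_big => [g|g Bg]; first by rewrite groupMr.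
by rewrite chiM // rhoM // scalerA mulrCA -expr2 chi_sqr // mulr1 scalemxAl.
Qed.

Lemma mx_avg_mull h : h \in B -> rho h *m mx_avg B chi rho = chi h *: mx_avg B chi rho.
Proof.
move=> Bh; rewrite /mx_avg -scalemxAr mulmx_sumr scalerA mulrC -scalerA.
congr (_ *: _); rewrite scaler_sumr [RHS](reindex_inj (mulgI h)) /=.
apply: eq_big => [g|g Bg]; first by rewrite groupMl.
by rewrite chiM // rhoM // scalerA mulrA -expr2 chi_sqr // mul1r scalemxAr.
Qed.

Lemma mx_avg_idem : mx_avg B chi rho *m mx_avg B chi rho = mx_avg B chi rho.
Proof.
rewrite {2}/mx_avg -scalemxAr mulmx_sumr.
under eq_bigr => g Bg do
  rewrite -scalemxAr mx_avg_mulr // scalerA -expr2 chi_sqr // scale1r.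
by rewrite sumr_const -scaler_nat scalerA mulVf ?scale1r // pnatr_eq0 -lt0n cardG_gt0.
Qed.

End SignCharacterAverage.

Section HermitianMatrices.

Local Open Scope sesquilinear_scope.
Variable C : numClosedFieldType.

Lemma trmxC_mul m n p (A : 'M[C]_(m, n)) (B : 'M[C]_(n, p)) :
  (A *m B)^t* = B^t* *m A^t*.
Proof. by rewrite trmx_mul map_mxM. Qed.

Lemma mxtrace_mul_trmxC_eq0 m n (N : 'M[C]_(m, n)) :
  (\tr (N *m N^t*) == 0) = (N == 0).
Proof.
have trE : \tr (N *m N^t*) = \sum_i dotmx (row i N) (row i N).
  by apply: eq_bigr => i _; rewrite dotmxE !mxE; apply: eq_bigr => j _; rewrite !mxE.
apply/idP/eqP => [|->]; last by rewrite mul0mx mxtrace0.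
rewrite trE psumr_eq0 => [/allP N0|i _]; last exact: (@dnorm_ge0 _ _ (@dotmx C n)).
apply/row_matrixP => i; rewrite row0; apply/eqP.
by rewrite -(@dnorm_eq0 _ _ (@dotmx C n)); apply: N0 (mem_index_enum _).
Qed.

Lemma mxtrace_mul_herm_idem_neq0 n (X Y : 'M[C]_n) :
  X^t* = X -> Y^t* = Y -> X *m X = X -> Y *m Y = Y -> X *m Y != 0 ->
  \tr (X *m Y) != 0.
Proof.
move=> X_herm Y_herm X_idem Y_idem; rewrite -mxtrace_mul_trmxC_eq0.
by rewrite trmxC_mul X_herm Y_herm mulmxA -(mulmxA X) Y_idem mxtrace_mulC mulmxA X_idem.
Qed.

Lemma mulmx_trmxC_diag m n (A : 'M[C]_(m, n)) (M : 'M[C]_n) i :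
  (A *m M *m A^t*) i i = (row i A *m M *m (row i A)^t*) 0 0.
Proof. by rewrite -row_mul !mxE; apply: eq_bigr => k _; rewrite !mxE. Qed.

Lemma posdef_herm_factor n (H : 'M[C]_n) :
  H^t* = H -> (forall y : 'rV_n, y != 0 -> 0 < (y *m H *m y^t*) 0 0) ->
  exists2 P, P \in unitmx & P^t* *m P = H.
Proof.
move=> H_herm H_pos; set U := spectralmx H; set d := spectral_diag H.
have U_unitary : U \is unitarymx := spectral_unitarymx H.
have UUt : U *m U^t* = 1%:M by apply/unitarymxP.
have H_diag : H = U^t* *m diag_mx d *m U.
  by rewrite -invmx_unitary //; apply/orthomx_spectralP/normalmxP; rewrite H_herm.
have d_pos i : 0 < d 0 i.
  have -> : d 0 i = (U *m H *m U^t*) i i.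
    by rewrite H_diag !mulmxA UUt mul1mx -mulmxA UUt mulmx1 mxE eqxx.
  rewrite mulmx_trmxC_diag; apply: H_pos; apply: contra_neq (oner_neq0 C) => Ui0.
  by have /row_unitarymxP/(_ i i) := U_unitary; rewrite eqxx Ui0 dotmxE mul0mx mxE.
pose r := \row_i sqrtC (d 0 i).
have r_herm : (diag_mx r)^t* = diag_mx r.
  apply/matrixP => i j; rewrite !mxE; case: eqVneq => [->|_]; last by rewrite conjC0.
  by rewrite !mulr1n geC0_conj // sqrtC_ge0 ltW.
exists (diag_mx r *m U).
  rewrite unitmx_mul (unitarymx_unit U_unitary) andbT unitmxE det_diag unitfE.
  by apply/prodf_neq0 => i _; rewrite mxE sqrtC_eq0 gt_eqF.
rewrite trmxC_mul r_herm mulmxA -(mulmxA (U^t*)) mulmx_diag H_diag.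
congr (_ *m diag_mx _ *m _).
by apply/rowP => i; rewrite !mxE -expr2 sqrtCK.
Qed.

Section Unitarization.

Variables (gT : finGroupType) (G : {group gT}) (n : nat) (rho : gT -> 'M[C]_n).
Hypothesis rho1 : rho 1%g = 1%:M.
Hypothesis rhoM : {in G &, forall x y, rho (x * y)%g = rho x *m rho y}.

Definition invariant_form : 'M[C]_n := \sum_(g in G) (rho g)^t* *m rho g.

Lemma invariant_form_herm : invariant_form^t* = invariant_form.
Proof.
rewrite /invariant_form raddf_sum map_mx_sum.
by apply: eq_bigr => g _; rewrite trmxC_mul trmxCK.
Qed.

Lemma invariant_form_posdef (y : 'rV_n) :
  y != 0 -> 0 < (y *m invariant_form *m y^t*) 0 0.
Proof.
move=> y_neq0; rewrite /invariant_form mulmx_sumr mulmx_suml summxE.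
rewrite (bigD1 1%g) ?group1 //= rho1 trmx1 map_mx1 !mulmx1 -dotmxE.
apply: ltr_wpDr; last exact: dotmx_is_dotmx.
apply: sumr_ge0 => g _.
have -> : y *m ((rho g)^t* *m rho g) *m y^t* = (y *m (rho g)^t*) *m (y *m (rho g)^t*)^t*.
  by rewrite trmxC_mul trmxCK !mulmxA.
by rewrite -dotmxE dnorm_ge0.
Qed.

Lemma invariant_formJ g : g \in G ->
  (rho g)^t* *m invariant_form = invariant_form *m rho (g^-1)%g.
Proof.
move=> Gg; rewrite /invariant_form mulmx_sumr mulmx_suml.
rewrite [RHS](reindex_inj (mulIg g)) /=; apply: eq_big => [h|h Gh].
  by rewrite groupMr.
by rewrite -mulmxA -rhoM ?groupV ?groupM // -mulgA mulgV mulg1 rhoM // trmxC_mul mulmxA.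
Qed.

Lemma unitarizable : exists2 P, P \in unitmx &
  {in G, forall g, (P *m rho g *m invmx P)^t* = P *m rho (g^-1)%g *m invmx P}.
Proof.
have [P Pu PtP] := posdef_herm_factor invariant_form_herm invariant_form_posdef.
exists P => // g Gg.
have -> : (P *m rho g *m invmx P)^t* =
    (invmx P)^t* *m ((rho g)^t* *m invariant_form) *m invmx P.
  by rewrite -PtP !trmxC_mul !mulmxA mulmxK.
by rewrite invariant_formJ // -PtP !mulmxA -trmxC_mul mulmxV // trmx1 map_mx1 mul1mx.
Qed.

End Unitarization.

Lemma trmxCZ m n (a : C) (A : 'M[C]_(m, n)) : (a *: A)^t* = a^* *: A^t*.
Proof. by rewrite linearZ /= map_mxZ. Qed.

Lemma mx_avg_trmxC (gT : finGroupType) (B : {group gT}) n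
    (chi : gT -> C) (rho : gT -> 'M[C]_n) :
  {in B &, forall x y, chi (x * y)%g = chi x * chi y} ->
  {in B, forall g, chi g ^+ 2 = 1} ->
  {in B, forall g, (rho g)^t* = rho (g^-1)%g} ->
  (mx_avg B chi rho)^t* = mx_avg B chi rho.
Proof.
move=> chiM chi_sqr rho_unitary.
rewrite /mx_avg trmxCZ fmorphV rmorph_nat raddf_sum map_mx_sum; congr (_ *: _).
rewrite [RHS](reindex_inj invg_inj) /=.
apply: eq_big => [g|g Bg]; first by rewrite groupV.
rewrite trmxCZ rho_unitary // (sign_charV chiM chi_sqr Bg).
by case: (sign_char_pm1 chi_sqr Bg) => ->; rewrite ?conjC1 ?conjCN1.
Qed.

Section TraceOfAverages.

Variables (gT : finGroupType) (G B1 B2 : {group gT}) (n : nat) (rho : gT -> 'M[C]_n).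
Variables chi1 chi2 : gT -> C.
Hypothesis rho1 : rho 1%g = 1%:M.
Hypothesis rhoM : {in G &, forall x y, rho (x * y)%g = rho x *m rho y}.
Hypotheses (sB1G : B1 \subset G) (sB2G : B2 \subset G).
Hypothesis chi1M : {in B1 &, forall x y, chi1 (x * y)%g = chi1 x * chi1 y}.
Hypothesis chi1_sqr : {in B1, forall g, chi1 g ^+ 2 = 1}.
Hypothesis chi2M : {in B2 &, forall x y, chi2 (x * y)%g = chi2 x * chi2 y}.
Hypothesis chi2_sqr : {in B2, forall g, chi2 g ^+ 2 = 1}.

Lemma mxtrace_mx_avg_mul_neq0 :
  mx_avg B1 chi1 rho *m mx_avg B2 chi2 rho != 0 ->
  \tr (mx_avg B1 chi1 rho *m mx_avg B2 chi2 rho) != 0.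
Proof.
have [P Pu rhoP_unitary] := unitarizable rho1 rhoM.
set rhoP := fun g => P *m rho g *m invmx P.
have rhoPM : {in G &, forall x y, rhoP (x * y)%g = rhoP x *m rhoP y}.
  by move=> x y Gx Gy; rewrite /rhoP rhoM // !mulmxA mulmxKV.
set M := mx_avg B1 chi1 rho *m mx_avg B2 chi2 rho => M_neq0.
have M_conj : P *m M *m invmx P = mx_avg B1 chi1 rhoP *m mx_avg B2 chi2 rhoP.
  by rewrite -!mx_avg_conj !mulmxA mulmxKV.
have -> : \tr M = \tr (P *m M *m invmx P) by rewrite [RHS]mxtrace_mulC mulKmx.
rewrite M_conj; apply: mxtrace_mul_herm_idem_neq0.
- exact: mx_avg_trmxC chi1M chi1_sqr (sub_in1 (subsetP sB1G) rhoP_unitary).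
- exact: mx_avg_trmxC chi2M chi2_sqr (sub_in1 (subsetP sB2G) rhoP_unitary).
- exact: mx_avg_idem chi1M chi1_sqr (sub_in2 (subsetP sB1G) rhoPM).
- exact: mx_avg_idem chi2M chi2_sqr (sub_in2 (subsetP sB2G) rhoPM).
rewrite -M_conj; apply: contra_neq M_neq0 => PMP0.
by rewrite -[M](mulKmx Pu) -[P *m M](mulmxKV Pu) PMP0 mul0mx mulmx0.
Qed.

End TraceOfAverages.

End HermitianMatrices.

Section ParabolicSubgroups.

Variables (gT : finGroupType) (l : nat) (s : 'I_l -> gT).
Implicit Type B : {set 'I_l}.

Lemma parabolic_group_set B : group_set (parabolic s B).
Proof. exact: groupP. Qed.

Canonical parabolic_group B := group (parabolic_group_set B).

Lemma mem_parabolic B i : i \in B -> s i \in parabolic s B.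
Proof. by move=> Bi; apply/mem_gen/imset_f. Qed.

Lemma parabolic_ind B (P : gT -> Prop) :
  P 1%g -> (forall i y, i \in B -> y \in parabolic s B -> P y -> P (s i * y)%g) ->
  {in parabolic s B, forall g, P g}.
Proof. by move=> P1 PM; apply: gen_mul_ind => // _ y /imsetP[i Bi ->]; apply: PM. Qed.

End ParabolicSubgroups.

Section WGraphOperator.

Variables (R : realType) (n l : nat) (m : 'I_n -> 'I_n -> R[i]).
Variable tau : 'I_n -> {set 'I_l}.

Lemma row_wg_op a u : a \notin tau u -> row u (wg_op m tau a) = delta_mx 0 u.
Proof.
move=> a_u; apply/rowP => w; rewrite !mxE eqxx /=.
case: ifP => [a_w|_]; last by rewrite (negbTE a_u) mul0r subr0 eq_sym.
rewrite eq_sym; have /negbTE-> : w != u by apply: contraNneq a_u => <-.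
by rewrite mulr0n oppr0.
Qed.

Lemma col_wg_op a u : a \in tau u -> col u (wg_op m tau a) = - delta_mx u 0.
Proof. by move=> a_u; apply/colP => w; rewrite !mxE a_u eqxx andbT. Qed.

Lemma row_wg_op_mul a u p (M : 'M_(n, p)) :
  a \notin tau u -> row u (wg_op m tau a *m M) = row u M.
Proof. by move=> a_u; rewrite row_mul row_wg_op // -rowE. Qed.

Lemma col_mul_wg_op a u p (M : 'M_(p, n)) :
  a \in tau u -> col u (M *m wg_op m tau a) = - col u M.
Proof. by move=> a_u; rewrite colE -mulmxA -colE col_wg_op // mulmxN -colE. Qed.

End WGraphOperator.

Section WeakWGraph.

Variables (R : realType) (k l : nat) (Phi : seq 'rV[R]_k) (alpha : 'I_l -> 'rV[R]_k).
Variables (gT : finGroupType) (W : {group gT}) (s : 'I_l -> gT) (rho0 : gT -> 'M[R]_k).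
Variables (n : nat) (m : 'I_n -> 'I_n -> R[i]) (tau : 'I_n -> {set 'I_l}).
Variable rho : gT -> 'M[R[i]]_n.
Hypothesis weylW : is_weyl_group Phi alpha W s rho0.
Hypothesis wg_rep : is_wg_rep m tau W s rho.

Local Notation sgn := (sgnW rho0).
Implicit Types (A B : {set 'I_l}).

Lemma parabolic_sub B : parabolic s B \subset W.
Proof.
case: weylW => [[_ _ -> _] _]; apply: genS.
by apply/subsetP => _ /imsetP[i _ ->]; apply: imset_f.
Qed.

Lemma sgnW_mul : {in W &, forall x y, sgn (x * y)%g = sgn x * sgn y}.
Proof.
by case: weylW => _ [rho0M _ _] x y Wx Wy; rewrite /sgnW rho0M // det_mulmx rmorphM.
Qed.

Lemma sgnW_s i : sgn (s i) = -1.
Proof.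
case: weylW => [[[[_ Phi0 _ _] _] [Phi_alpha _ _] _ _] [_ _ rho0_s]].
rewrite /sgnW rho0_s det_refl_mx ?rmorphN1 //.
by apply: contraNneq Phi0 => <-; apply: Phi_alpha.
Qed.

Lemma sgnW1 : sgn 1%g = 1.
Proof. by case: weylW => [[_ _ _ rho01] _]; rewrite /sgnW rho01 det1 rmorph1. Qed.

Lemma sgnW_sqr B : {in parabolic s B, forall g, sgn g ^+ 2 = 1}.
Proof.
apply: parabolic_ind => [|i y Bi By IHy].
  by rewrite sgnW1 expr1n.
rewrite sgnW_mul ?(subsetP (parabolic_sub B)) ?mem_parabolic // exprMn IHy sgnW_s.
by rewrite sqrrN expr1n mulr1.
Qed.

Let sgnW_mul_parabolic B :
  {in parabolic s B &, forall x y, sgn (x * y)%g = sgn x * sgn y}.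
Proof. by move=> x y Bx By; rewrite sgnW_mul ?(subsetP (parabolic_sub B)). Qed.

Let rho1 : rho 1%g = 1%:M.
Proof. by case: wg_rep. Qed.

Let rhoM : {in W &, forall x y, rho (x * y)%g = rho x *m rho y}.
Proof. by case: wg_rep. Qed.

Let rhoM_parabolic B : {in parabolic s B &, forall x y, rho (x * y)%g = rho x *m rho y}.
Proof. by move=> x y Bx By; rewrite rhoM ?(subsetP (parabolic_sub B)). Qed.

Let rho_s a : rho (s a) = wg_op m tau a.
Proof. by case: wg_rep. Qed.

Lemma row_rho_parabolic B v : [disjoint B & tau v] ->
  {in parabolic s B, forall g, row v (rho g) = delta_mx 0 v}.
Proof.
move=> Bv; apply: parabolic_ind => [|i y Bi By IHy]; first by rewrite rho1 rowE mulmx1.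
by rewrite (@rhoM_parabolic B) ?mem_parabolic // rho_s row_wg_op_mul ?(disjointFr Bv Bi).
Qed.

Lemma col_rho_parabolic B v : B \subset tau v ->
  {in parabolic s B, forall g, col v (rho g) = sgn g *: delta_mx v 0}.
Proof.
move=> Bv; apply: parabolic_ind => [|i y Bi By IHy].
  by rewrite rho1 sgnW1 scale1r colE mul1mx.
rewrite (@rhoM_parabolic B) ?(@sgnW_mul_parabolic B) ?mem_parabolic //.
rewrite colE -mulmxA -colE IHy -scalemxAr -colE rho_s col_wg_op ?(subsetP Bv) //.
by rewrite sgnW_s mulN1r scalerN scaleNr.
Qed.

Lemma QopE B : Qop s rho B = mx_avg (parabolic s B) (fun=> 1) rho.
Proof. by rewrite /Qop /mx_avg; under [in RHS]eq_bigr do rewrite scale1r. Qed.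

Lemma RopE B : Rop s rho0 rho B = mx_avg (parabolic s B) sgn rho.
Proof. by []. Qed.

Lemma Qop_mulr B h : h \in parabolic s B -> Qop s rho B *m rho h = Qop s rho B.
Proof.
move=> Bh; rewrite QopE mx_avg_mulr ?scale1r //.
- by move=> x y _ _; rewrite mulr1.
- by move=> x _; rewrite expr1n.
- exact: rhoM_parabolic.
Qed.

Lemma Rop_mull B h :
  h \in parabolic s B -> rho h *m Rop s rho0 rho B = sgn h *: Rop s rho0 rho B.
Proof.
exact: mx_avg_mull (@sgnW_mul_parabolic B) (@sgnW_sqr B) (@rhoM_parabolic B) h.
Qed.

Lemma Qop_row B v u : [disjoint B & tau v] -> Qop s rho B v u = (v == u)%:R.
Proof.
move=> Bv; rewrite QopE; apply: mx_avg_entry_const => g Bg.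
have /rowP/(_ u) := row_rho_parabolic Bv Bg.
by rewrite !mxE mul1r eq_sym => ->.
Qed.

Lemma Rop_col B u v : B \subset tau v -> Rop s rho0 rho B u v = (u == v)%:R.
Proof.
move=> Bv; apply: mx_avg_entry_const => g Bg.
have /colP/(_ u) := col_rho_parabolic Bv Bg.
by rewrite !mxE => ->; rewrite mulrA -expr2 (sgnW_sqr Bg) mul1r andbT.
Qed.

Lemma Qop_col_eq0 B u b : b \in B -> b \in tau u -> col u (Qop s rho B) = 0.
Proof.
move=> Bb b_u; have := col_mul_wg_op m (Qop s rho B) b_u.
rewrite -rho_s Qop_mulr ?mem_parabolic // => QN; apply/colP => i.
by have /colP/(_ i)/eqP := QN; rewrite !mxE eq_sym eqNr => /eqP.
Qed.

Lemma Rop_row_eq0 B u a : a \in B -> a \notin tau u -> row u (Rop s rho0 rho B) = 0.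
Proof.
move=> Ba a_u; have := row_wg_op_mul m (Rop s rho0 rho B) a_u.
rewrite -rho_s Rop_mull ?mem_parabolic // sgnW_s scaleN1r => RN; apply/rowP => j.
by have /rowP/(_ j)/eqP := RN; rewrite !mxE eqNr => /eqP.
Qed.

Lemma Qop_mul_Rop_neq0 A v : tau v = A -> Qop s rho (~: A) *m Rop s rho0 rho A != 0.
Proof.
move=> tvA; apply: contra_neq (oner_neq0 R[i]) => QR0.
have /matrixP/(_ v v) := QR0; rewrite !mxE (bigD1 v) //= big1 => [|u uv].
  by rewrite Qop_row ?Rop_col ?tvA ?disjoints_subset // eqxx mulr1 addr0.
by rewrite Qop_row ?tvA ?disjoints_subset // eq_sym (negbTE uv) mul0r.
Qed.

Lemma Qop_mul_Rop_eq0 A :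
  (forall v, tau v != A) -> Qop s rho (~: A) *m Rop s rho0 rho A = 0.
Proof.
move=> tau_neqA; apply/matrixP => i j; rewrite !mxE big1 // => u _.
have [A_tau|] := boolP (A \subset tau u).
  have /subsetPn[b b_u bA] : ~~ (tau u \subset A).
    by have := tau_neqA u; rewrite eqEsubset A_tau andbT.
  have Bb : b \in ~: A by rewrite inE.
  by have /colP/(_ i) := Qop_col_eq0 Bb b_u; rewrite !mxE => ->; rewrite mul0r.
case/subsetPn => a aA a_u.
by have /rowP/(_ j) := Rop_row_eq0 aA a_u; rewrite !mxE => ->; rewrite mulr0.
Qed.

Lemma mxtrace_Qop_mul_Rop_neq0 A : Qop s rho (~: A) *m Rop s rho0 rho A != 0 ->
  \tr (Qop s rho (~: A) *m Rop s rho0 rho A) != 0.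
Proof.
rewrite QopE RopE; apply: (mxtrace_mx_avg_mul_neq0 (chi1 := fun=> 1) rho1 rhoM).
- exact: parabolic_sub.
- exact: parabolic_sub.
- by move=> x y _ _; rewrite mulr1.
- by move=> x _; rewrite expr1n.
- exact: sgnW_mul_parabolic.
- exact: sgnW_sqr.
Qed.

End WeakWGraph.

Theorem theorem2p10 (R : realType) (k l : nat) (Phi : seq 'rV[R]_k)
    (alpha : 'I_l -> 'rV[R]_k) (gT : finGroupType) (W : {group gT})
    (s : 'I_l -> gT) (rho0 : gT -> 'M[R]_k)
    (n : nat) (m : 'I_n -> 'I_n -> R[i]) (tau : 'I_n -> {set 'I_l})
    (rho : gT -> 'M[R[i]]_n) (A : {set 'I_l}) :
  is_weyl_group Phi alpha W s rho0 ->
  is_wg_rep m tau W s rho ->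
  [<-> exists v : 'I_n, tau v = A;
       Qop s rho (~: A) *m Rop s rho0 rho A != 0;
       \tr (Qop s rho (~: A) *m Rop s rho0 rho A) != 0;
       \tr (Rop s rho0 rho A *m Qop s rho (~: A)) != 0].
Proof.
move=> weylW wg_rep; tfae.
- by case=> v /(Qop_mul_Rop_neq0 weylW wg_rep).
- by move/(mxtrace_Qop_mul_Rop_neq0 weylW wg_rep).
- by rewrite mxtrace_mulC.
- rewrite mxtrace_mulC; case: (pickP (fun v => tau v == A)) => [v /eqP tvA _ | tau_neqA].
    by exists v.
  by rewrite (Qop_mul_Rop_eq0 weylW wg_rep) ?mxtrace0 ?eqxx // => v; rewrite tau_neqA.
Qed.
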